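(* Let $(N_1,m_1)$ and $(N_2,m_2)$ be labeled marked Petri nets and $E$ a system of linear constraints such that $(N_1,m_1)\vartriangleright_E(N_2,m_2)$. Then for all markings $m_1'$ of $N_1$ and $m_2'$ of $N_2$ such that $m_1'\uplus m_2'\models E$ and $m_2'\in R(N_2,m_2)$, we have $m_1'\in R(N_1,m_1)$.
   Context: A Petri net $N=(P,T,\mathrm{Pre},\mathrm{Post})$ has a finite set of places $P$, a finite set of transitions $T$ disjoint from $P$, and flow functions $\mathrm{Pre},\mathrm{Post}:T\to(P\to\mathbb N)$. A marking is a map $m:P\to\mathbb N$. Transition $t$ is enabled at $m$ if $m(p)\ge\mathrm{Pre}(t,p)$ for all $p$; firing it yields $m'=m-\mathrm{Pre}(t)+\mathrm{Post}(t)$. A firing sequence $\varrho$ leads from $m$ to $m'$ ($m\overset{\varrho}{\Rightarrow}m'$) if its transitions can be fired successively from $m$ reaching $m'$; $R(N,m_0)$ is the set of markings reachable from $m_0$. A labeled net has a labeling $l:T\to\Sigma\cup\{\tau\}$ ($\tau\notin\Sigma$ silent), extended to sequences by $l(\epsilon)=\epsilon$, $\tau$ mapped to $\epsilon$, $l(\varrho t)=l(\varrho)l(t)$. Formulas are Boolean combinations of linear (in)equalities over integer variables; place names are used as variables. For a marking $m$ over $P$, $\underline m\triangleq\bigwedge_{p\in P}(p=m(p))$; $m\models\phi$ means $\phi\wedge\underline m$ is satisfiable over the integers. Markings $m_1$ over $P_1$, $m_2$ over $P_2$ are compatible if they agree on $P_1\cap P_2$; then $m_1\uplus m_2$ is the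 marking on $P_1\cup P_2$ agreeing with both; $m_1\uplus m_2\models E$ presupposes compatibility. $E$-abstraction (for $N_1,N_2$ with labelings $l_1,l_2$ over the same alphabet): $(N_1,m_1)\sqsupseteq_E(N_2,m_2)$ iff (A1) $m_1\uplus m_2\models E$; and (A2) for every firing sequence $m_1\overset{\varrho_1}{\Rightarrow}m_1'$ in $N_1$ there is at least one marking $m_2'$ over $P_2$ with $m_1'\uplus m_2'\models E$, and for every marking $m_2'$ over $P_2$ with $m_1'\uplus m_2'\models E$ there is a firing sequence $\varrho_2$ of $N_2$ with $m_2\overset{\varrho_2}{\Rightarrow}m_2'$ and $l_1(\varrho_1)=l_2(\varrho_2)$. $(N_1,m_1)\vartriangleright_E(N_2,m_2)$ means both directions hold. *)

From mathcomp Require Import all_boot all_order all_algebra.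
Set Implicit Arguments. Unset Strict Implicit. Unset Printing Implicit Defensive.
Import GRing.Theory Num.Theory.
Local Open Scope ring_scope.

Record linexpr (V : Type) := LinExpr { lconst : int; lcoefs : seq (int * V) }.

Definition eval_lin (V : Type) (s : V -> int) (e : linexpr V) : int :=
  lconst e + \sum_(cv <- lcoefs e) (cv.1 * s cv.2).

Inductive formula (V : Type) :=
  | FTrue
  | FLe  of linexpr V & linexpr V
  | FEq  of linexpr V & linexpr V
  | FNot of formula V
  | FAnd of formula V & formula V
  | FOr  of formula V & formula V.

Fixpoint eval_form (V : Type) (s : V -> int) (f : formula V) : Prop :=
  match f with
  | FTrue => True
  | FLe e1 e2 => eval_lin s e1 <= eval_lin s e2
  | FEq e1 e2 => eval_lin s e1 = eval_lin s e2
  | FNot g => ~ eval_form s g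
  | FAnd g h => eval_form s g /\ eval_form s h
  | FOr g h => eval_form s g \/ eval_form s h
  end.

(* Places are finitely many, named by (distinct) variables of type V, so that
   the places of two nets may overlap (same name = same place), and place
   names serve as formula variables. Labels: None is the silent label tau. *)
Record net (V Sigma : Type) := Net {
  place : finType;
  trans : finType;
  pre   : trans -> place -> nat;
  post  : trans -> place -> nat;
  lab   : trans -> option Sigma;
  pname : place -> V;
  pname_inj : injective pname
}.

Definition marking V Sigma (N : net V Sigma) := place N -> nat.

Definition enabled V Sigma (N : net V Sigma) (m : marking N) (t : trans N) : Prop :=
  forall p, (pre t p <= m p)%N.

Definition fire V Sigma (N : net V Sigma) (m : marking N) (t : trans N)
  (m' : marking N) : Prop :=
  enabled m t /\ forall p, m' p = (m p - pre t p + post t p)%N.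

Inductive fires V Sigma (N : net V Sigma) : marking N -> seq (trans N) -> marking N -> Prop :=
  | fires_nil m : fires m [::] m
  | fires_cons m t m1 s m' : fire m t m1 -> fires m1 s m' -> fires m (t :: s) m'.

Definition reachable V Sigma (N : net V Sigma) (m m' : marking N) : Prop :=
  exists s, fires m s m'.

Definition lab_seq V Sigma (N : net V Sigma) (s : seq (trans N)) : seq Sigma :=
  pmap (@lab V Sigma N) s.

(* m1 ⊎ m2 ⊨ E : m1, m2 compatible and E ∧ (m1 ⊎ m2) satisfiable over Z.
   Compatibility is implied by the existence of a common valuation. *)
Definition sat2 V Sigma (N1 N2 : net V Sigma) (m1 : marking N1) (m2 : marking N2)
  (E : formula V) : Prop :=
  exists s : V -> int,
    (forall p, s (pname p) = (m1 p)%:Z) /\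
    (forall p, s (pname p) = (m2 p)%:Z) /\
    eval_form s E.

Definition abstr V Sigma (N1 N2 : net V Sigma) (m1 : marking N1) (m2 : marking N2)
  (E : formula V) : Prop :=
  sat2 m1 m2 E /\
  forall (r1 : seq (trans N1)) (m1' : marking N1), fires m1 r1 m1' ->
    (exists m2' : marking N2, sat2 m1' m2' E) /\
    (forall m2' : marking N2, sat2 m1' m2' E ->
       exists r2 : seq (trans N2), fires m2 r2 m2' /\ lab_seq r1 = lab_seq r2).

Definition equiv_E V Sigma (N1 N2 : net V Sigma) (m1 : marking N1) (m2 : marking N2)
  (E : formula V) : Prop :=
  abstr m1 m2 E /\ abstr m2 m1 E.

From mathcomp Require Import all_boot all_order all_algebra.

Lemma sat2_sym {V Sigma : Type} {N1 N2 : net V Sigma}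
  {m1 : marking N1} {m2 : marking N2} {E : formula V} :
  sat2 m1 m2 E -> sat2 m2 m1 E.
Proof. by move=> [s [s_m1 [s_m2 sE]]]; exists s. Qed.

Lemma abstr_reachable {V Sigma : Type} {N1 N2 : net V Sigma}
  {m1 : marking N1} {m2 : marking N2} {E : formula V} :
  abstr m1 m2 E ->
  forall (m1' : marking N1) (m2' : marking N2),
    reachable m1 m1' -> sat2 m1' m2' E -> reachable m2 m2'.
Proof.
move=> [_ abs_runs] m1' m2' [r1 fires_r1] sat'.
have [_ /(_ m2' sat') [r2 [fires_r2 _]]] := abs_runs r1 m1' fires_r1.
by exists r2.
Qed.

Theorem lemma2 (V Sigma : Type) (N1 N2 : net V Sigma)
  (m1 : marking N1) (m2 : marking N2) (E : formula V) :
  equiv_E m1 m2 E ->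
  forall (m1' : marking N1) (m2' : marking N2),
    sat2 m1' m2' E -> reachable m2 m2' -> reachable m1 m1'.
Proof.
move=> [_ abs21] m1' m2' sat' reach2.
exact: abstr_reachable abs21 m2' m1' reach2 (sat2_sym sat').
Qed.
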